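(* Let $m,n\ge1$ and let $r$ be an integer with $\frac{\min\{m,n\}+2}{2}<r<\min\{m,n\}$. Then $\mathrm{Hrk}_r^\circ(m,n)=2$.
   Context: Work over $\mathbb{C}$. For projective varieties $X,Y\subset\mathbb{P}^N$, $X\star Y$ is the Zariski closure of the set of entrywise products $p\star q=[p_0q_0:\dots:p_Nq_N]$ ($p\in X,q\in Y$, defined); $X^{\star1}=X$, $X^{\star s}=X\star X^{\star(s-1)}$. $X_r\subset\mathbb{P}(\mathrm{Mat}_{m,n})$ is the variety of $m\times n$ matrices of rank at most $r$, and $\mathrm{Hrk}_r^\circ(m,n)=\min\{s\mid X_r^{\star s}=\mathbb{P}(\mathrm{Mat}_{m,n})\}$. *)

From HB Require Import structures.
From mathcomp Require Import all_boot all_order all_algebra.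
Set Implicit Arguments. Unset Strict Implicit. Unset Printing Implicit Defensive.
Import Order.TTheory GRing.Theory Num.Theory.
Local Open Scope ring_scope.

(* Projective subvarieties of P(Mat_{m,n}) are represented by their affine
   cones: scaling-invariant subsets of the space of m x n matrices over C. *)

Inductive mpoly (C : Type) (m n : nat) : Type :=
| PConst of C
| PVar of 'I_m & 'I_n
| PAdd of mpoly C m n & mpoly C m n
| PMul of mpoly C m n & mpoly C m n.

Fixpoint peval (C : numClosedFieldType) (m n : nat) (p : mpoly C m n)
  (A : 'M[C]_(m, n)) : C :=
  match p with
  | PConst c => c
  | PVar i j => A i j
  | PAdd p q => peval p A + peval q A
  | PMul p q => peval p A * peval q A
  end.

Definition zariski_closure (C : numClosedFieldType) (m n : nat)
  (S : 'M[C]_(m, n) -> Prop) : 'M[C]_(m, n) -> Prop :=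
  fun A => forall p : mpoly C m n,
    (forall B, S B -> peval p B = 0) -> peval p A = 0.

Definition hprod (C : numClosedFieldType) (m n : nat) (A B : 'M[C]_(m, n)) :
  'M[C]_(m, n) := \matrix_(i, j) (A i j * B i j).

Definition hadamard (C : numClosedFieldType) (m n : nat)
  (X Y : 'M[C]_(m, n) -> Prop) : 'M[C]_(m, n) -> Prop :=
  zariski_closure (fun M => exists A B, [/\ X A, Y B & M = hprod A B]).

Fixpoint hpow (C : numClosedFieldType) (m n : nat)
  (X : 'M[C]_(m, n) -> Prop) (s : nat) : 'M[C]_(m, n) -> Prop :=
  match s with
  | 0%N => X
  | 1%N => X
  | s'.+1 => hadamard X (hpow X s')
  end.

Definition rank_le (C : numClosedFieldType) (m n r : nat) : 'M[C]_(m, n) -> Prop :=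
  fun A => (\rank A <= r)%N.

Definition is_full (C : numClosedFieldType) (m n : nat)
  (X : 'M[C]_(m, n) -> Prop) : Prop := forall A, X A.

Definition is_Hrk (C : numClosedFieldType) (m n r k : nat) : Prop :=
  [/\ (1 <= k)%N, is_full (hpow (@rank_le C m n r) k)
    & forall s, (1 <= s)%N -> is_full (hpow (@rank_le C m n r) s) -> (k <= s)%N].

From mathcomp Require Import all_boot all_order all_algebra.
From mathcomp Require Import zify.
Set Implicit Arguments. Unset Strict Implicit. Unset Printing Implicit Defensive.
Import Order.TTheory GRing.Theory Num.Theory.
Local Open Scope ring_scope.

(* Split the rows into a block of a rows and a block of m - a rows.  Let B
   agree with A on the first block and be all ones on the second, and D the
   other way round; then A = B * D entrywise.  Each factor is a block of rows
   of A plus a rank-one matrix, so rank B <= a + 1 and rank D <= m - a + 1,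
   both at most r for a suitable a once min(m, n) + 2 <= 2r (transpose if
   n < m).  Hence X_r * X_r is everything, while X_r is not since
   r < min(m, n). *)

Section PidMul.

Variable R : pzRingType.

Lemma mul_pid_mxE m n r (A : 'M[R]_(m, n)) i j :
  (pid_mx r *m A) i j = if (i < r)%N then A i j else 0.
Proof.
rewrite mxE (bigD1 i) //= big1 => [|k nki]; last first.
  by rewrite mxE eq_sym (negbTE (nki : (k : nat) != i)) mul0r.
by rewrite mxE eqxx /=; case: ifP; rewrite ?mul1r ?mul0r addr0.
Qed.

Lemma mul_copid_mxE m n r (A : 'M[R]_(m, n)) i j :
  (copid_mx r *m A) i j = if (i < r)%N then 0 else A i j.
Proof.
rewrite /copid_mx mulmxBl mul1mx mxE [(- _ : 'M_(_, _)) _ _]mxE mul_pid_mxE.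
by case: ifP; rewrite ?subrr ?subr0.
Qed.

End PidMul.

Lemma mxrank_const_mx_le1 (F : fieldType) m n (a : F) :
  (\rank (const_mx a : 'M[F]_(m, n)) <= 1)%N.
Proof.
have -> : const_mx a = (const_mx a : 'cV[F]_m) *m (const_mx 1 : 'rV[F]_n).
  by apply/matrixP => i j; rewrite !mxE big_ord1 !mxE mulr1.
exact: leq_trans (mxrankM_maxl _ _) (rank_leq_col _).
Qed.

Lemma trmx_hprod (C : numClosedFieldType) m n (A B : 'M[C]_(m, n)) :
  (hprod A B)^T = hprod A^T B^T.
Proof. by apply/matrixP => i j; rewrite !mxE. Qed.

Lemma hprod_factor_rows (C : numClosedFieldType) m n a (A : 'M[C]_(m, n)) :
  (a <= m)%N ->
  exists B D : 'M[C]_(m, n),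
    [/\ (\rank B <= a.+1)%N, (\rank D <= (m - a).+1)%N & A = hprod B D].
Proof.
move=> le_am; pose J : 'M[C]_(m, n) := const_mx 1.
have rank_sum_le (P Q : 'M[C]_m) k :
    (\rank P <= k)%N -> (\rank (P *m A + Q *m J)%R <= k.+1)%N.
  move=> rankP; rewrite -addn1; apply: leq_trans (mxrank_add _ _) _.
  apply: leq_add; first exact: leq_trans (mxrankM_maxl _ _) rankP.
  exact: leq_trans (mxrankM_maxr _ _) (mxrank_const_mx_le1 _ _ _).
exists (pid_mx a *m A + copid_mx a *m J), (copid_mx a *m A + pid_mx a *m J).
split.
- by apply: rank_sum_le; rewrite rank_pid_mx.
- by apply: rank_sum_le; rewrite rank_copid_mx.
apply/matrixP => i j; rewrite mxE ![(_ + _ : 'M_(_, _)) _ _]mxE.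
rewrite !mul_pid_mxE !mul_copid_mxE !mxE.
by case: ifP; rewrite ?addr0 ?add0r ?mulr1 ?mul1r.
Qed.

Lemma hprod_factor_rank_le (C : numClosedFieldType) m n r (A : 'M[C]_(m, n)) :
  (minn m n + 2 <= 2 * r)%N ->
  exists B D : 'M[C]_(m, n),
    [/\ (\rank B <= r)%N, (\rank D <= r)%N & A = hprod B D].
Proof.
have rows p q (M : 'M[C]_(p, q)) : (p + 2 <= 2 * r)%N ->
    exists B D : 'M[C]_(p, q),
      [/\ (\rank B <= r)%N, (\rank D <= r)%N & M = hprod B D].
  move=> le_pr; have le_ap : (minn r.-1 p <= p)%N by rewrite geq_minr.
  have [B [D [rankB rankD ->]]] := hprod_factor_rows M le_ap.
  by exists B, D; split => //; [apply: leq_trans rankB _ | apply: leq_trans rankD _]; lia.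
case: (leqP m n) => [le_mn | lt_nm] le_r.
  by apply: rows; lia.
have [B [D [rankB rankD eqAt]]] := rows _ _ A^T ltac:(lia).
exists B^T, D^T; rewrite !mxrank_tr; split => //.
by rewrite -trmx_hprod -eqAt trmxK.
Qed.

Lemma subset_zariski_closure (C : numClosedFieldType) m n
    (S : 'M[C]_(m, n) -> Prop) A :
  S A -> zariski_closure S A.
Proof. by move=> SA p; apply. Qed.

Lemma rank_le_not_full (C : numClosedFieldType) m n r :
  (r < minn m n)%N -> ~ is_full (@rank_le C m n r).
Proof.
move=> lt_r /(_ (pid_mx (minn m n))).
by rewrite /rank_le rank_pid_mx ?geq_minl ?geq_minr // leqNgt lt_r.
Qed.

Theorem mainTheorem14 (C : numClosedFieldType) (m n r : nat) :
  (1 <= m)%N -> (1 <= n)%N ->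
  (minn m n + 2 < 2 * r)%N -> (r < minn m n)%N ->
  is_Hrk C m n r 2.
Proof.
move=> _ _ le_r lt_r; split => // [A | [|[|s]] // _ full1].
- apply: subset_zariski_closure.
  have [B [D [rankB rankD ->]]] := hprod_factor_rank_le A (ltnW le_r).
  by exists B, D.
- by case: (rank_le_not_full lt_r full1).
Qed.
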